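(* Let $0<q<1$, $I=[0,b)$ with $0<b\le\infty$, and let $u_0:I\to\mathbb{R}$ be continuous with $1-(1-q)tu_0(t)>0$ and $1+(1-q)tu_0(qt)>0$ for all $t\in I$. Put $$V(x)=\partial_qu_0(x)+u_0(x)u_0(qx),\qquad x\in I\setminus\{0\}.$$ Then for all constants $D,F\in\mathbb{R}$ the function $$\psi(x)=\exp\Big(-\frac{1}{1-q}\int_0^x\frac{\ln(1-(1-q)tu_0(t))}{t}d_qt\Big)\Big[D+F\int_0^x\frac{1}{1-(1-q)tu_0(t)}\exp\Big(\frac{1}{1-q}\int_0^t\frac1s\ln\frac{1-(1-q)su_0(s)}{1+(1-q)su_0(qs)}d_qs\Big)d_qt\Big]$$ solves the $q$-difference Schrödinger equation $-\partial_q^2\psi(x)+V(x)\psi(x)=0$ on $I\setminus\{0\}$ (here $\partial_q^2\psi$ is computed by first taking $\partial_q\psi$ on $I\setminus\{0\}$ and extending it by continuity to $0$, where it exists), with $\psi(0)=D$.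
   Context: $\partial_q f(x)=\dfrac{f(x)-f(qx)}{(1-q)x}$ for $x\neq0$; $\int_0^x f(t)\,d_qt=\sum_{n\ge0}(1-q)q^nx\,f(q^nx)$ (Jackson $q$-integral). *)

From Stdlib Require Import Reals.
From Coquelicot Require Import Coquelicot.
Open Scope R_scope.

Definition dq (q : R) (f : R -> R) (x : R) : R :=
  (f x - f (q * x)) / ((1 - q) * x).

Definition jackson (q : R) (f : R -> R) (x : R) : R :=
  Series (fun n : nat => (1 - q) * q ^ n * x * f (q ^ n * x)).

Definition inI (b : Rbar) (t : R) : Prop := 0 <= t /\ Rbar_lt t b.

Definition Vpot (q : R) (u0 : R -> R) (x : R) : R :=
  dq q u0 x + u0 x * u0 (q * x).

Definition psi (q : R) (u0 : R -> R) (D F : R) (x : R) : R :=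
  exp (- (1 / (1 - q)) *
       jackson q (fun t => ln (1 - (1 - q) * t * u0 t) / t) x) *
  (D + F * jackson q
     (fun t => 1 / (1 - (1 - q) * t * u0 t) *
        exp (1 / (1 - q) *
             jackson q (fun s => 1 / s *
               ln ((1 - (1 - q) * s * u0 s) / (1 + (1 - q) * s * u0 (q * s)))) t))
     x).

From Stdlib Require Import Reals Lra Lia.
From Coquelicot Require Import Coquelicot.
Open Scope R_scope.

(* With a(t) = 1 - (1-q) t u0(t) and c(t) = 1 + (1-q) t u0(qt), the Jackson integral
   satisfies J f x - J f (qx) = (1-q) x f(x) whenever its series converges.  Hence the
   prefactor E, the inner exponential W and the quadrature G of psi obey
   E(qx) = a(x) E(x),  W(qx) = W(x) c(x) / a(x),  G(qx) = G(x) - (1-q) x W(x) / a(x).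
   Since dq (dq psi) x only involves psi at x, qx and q^2 x, these relations turn the
   equation into a rational identity.  Convergence comes from continuity of u0 at 0:
   along q^n x the integrands stay bounded, so the series are dominated by geometric
   ones. *)

Lemma pow_le_1 (q : R) (n : nat) : 0 <= q <= 1 -> q ^ n <= 1.
Proof. intros hq. rewrite <- (pow1 n). apply pow_incr. lra. Qed.

Lemma eventually_pow_mul_orbit (q y : R) (P : R -> Prop) :
  eventually (fun n => P (q ^ n * y)) ->
  eventually (fun n => forall k, P (q ^ k * (q ^ n * y))).
Proof.
  intros [N HN]. exists N. intros n hn k.
  rewrite <- Rmult_assoc, <- pow_add. apply HN. lia.
Qed.

Section JacksonIntegral.

Variable q : R.
Hypothesis hq : 0 < q < 1.

Lemma is_series_geom_pos : is_series (fun n => q ^ n) (/ (1 - q)).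
Proof. apply is_series_geom. rewrite Rabs_pos_eq; lra. Qed.

Lemma ex_series_jackson (f : R -> R) (x M : R) :
  eventually (fun n => Rabs (f (q ^ n * x)) <= M) ->
  ex_series (fun n => (1 - q) * q ^ n * x * f (q ^ n * x)).
Proof.
  intros [N HN].
  apply (ex_series_incr_n _ N).
  apply (@ex_series_le R_AbsRing R_CompleteNormedModule)
    with (fun k => ((1 - q) * Rabs x * M * q ^ N) * q ^ k).
  - intros k. change (norm ?t) with (Rabs t).
    assert (hk := HN (N + k)%nat ltac:(lia)). rewrite pow_add in hk |- *.
    assert (0 <= q ^ N * q ^ k) by (apply Rmult_le_pos; apply pow_le; lra).
    rewrite Rabs_mult, (Rabs_mult ((1 - q) * (q ^ N * q ^ k))), (Rabs_mult (1 - q)).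
    rewrite (Rabs_pos_eq (1 - q)), (Rabs_pos_eq (q ^ N * q ^ k)) by lra.
    assert (0 <= Rabs x) by apply Rabs_pos.
    replace ((1 - q) * Rabs x * M * q ^ N * q ^ k)
      with ((1 - q) * (q ^ N * q ^ k) * Rabs x * M) by ring.
    apply Rmult_le_compat_l; [|exact hk].
    apply Rmult_le_pos; [apply Rmult_le_pos|]; lra.
  - exists (((1 - q) * Rabs x * M * q ^ N) * / (1 - q)).
    apply (is_series_scal_l _ (fun k => q ^ k)), is_series_geom_pos.
Qed.

Lemma Rabs_jackson_le (f : R -> R) (x M : R) :
  (forall n, Rabs (f (q ^ n * x)) <= M) ->
  Rabs (jackson q f x) <= M * Rabs x.
Proof.
  intros hM.
  set (bound := fun n => ((1 - q) * Rabs x * M) * q ^ n).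
  assert (hterm : forall n, Rabs ((1 - q) * q ^ n * x * f (q ^ n * x)) <= bound n).
  { intros n. unfold bound.
    rewrite !Rabs_mult, (Rabs_pos_eq (1 - q)), (Rabs_pos_eq (q ^ n)) by (try apply pow_le; lra).
    replace ((1 - q) * Rabs x * M * q ^ n) with ((1 - q) * q ^ n * Rabs x * M) by ring.
    apply Rmult_le_compat_l; [|apply hM].
    apply Rmult_le_pos; [apply Rmult_le_pos|]; try apply pow_le; try apply Rabs_pos; lra. }
  assert (hbound : is_series bound (M * Rabs x)).
  { replace (M * Rabs x) with (((1 - q) * Rabs x * M) * / (1 - q)) by (field; lra).
    apply (is_series_scal_l _ (fun k => q ^ k)), is_series_geom_pos. }
  assert (habs : ex_series (fun n => Rabs ((1 - q) * q ^ n * x * f (q ^ n * x)))).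
  { apply (@ex_series_le R_AbsRing R_CompleteNormedModule) with bound.
    - intros n. change (norm ?t) with (Rabs t). rewrite Rabs_Rabsolu. apply hterm.
    - eexists; eauto. }
  unfold jackson. eapply Rle_trans; [apply Series_Rabs, habs|].
  rewrite <- (is_series_unique _ _ hbound).
  apply Series_le; [|eexists; eauto].
  intros n. split; [apply Rabs_pos | apply hterm].
Qed.

End JacksonIntegral.

Lemma jackson_sub_scale (q : R) (f : R -> R) (x : R) :
  ex_series (fun n => (1 - q) * q ^ n * x * f (q ^ n * x)) ->
  jackson q f x - jackson q f (q * x) = (1 - q) * x * f x.
Proof.
  intros hex. unfold jackson. rewrite Series_incr_1 by exact hex.
  rewrite (Series_ext (fun n => (1 - q) * q ^ n * (q * x) * f (q ^ n * (q * x)))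
             (fun k => (1 - q) * q ^ S k * x * f (q ^ S k * x)))
    by (intros k; simpl; replace (q ^ k * (q * x)) with (q * q ^ k * x) by ring; ring).
  simpl. rewrite !Rmult_1_l, Rmult_1_r. ring.
Qed.

Lemma jackson_0 (q : R) (f : R -> R) : jackson q f 0 = 0.
Proof.
  unfold jackson.
  rewrite (Series_ext _ (fun _ => 0 * 1)) by (intros; ring).
  rewrite (Series_scal_l 0 (fun _ => 1)). ring.
Qed.

Definition prefactor_integrand (q : R) (u0 : R -> R) (t : R) : R :=
  ln (1 - (1 - q) * t * u0 t) / t.

Definition ratio_integrand (q : R) (u0 : R -> R) (s : R) : R :=
  1 / s * ln ((1 - (1 - q) * s * u0 s) / (1 + (1 - q) * s * u0 (q * s))).

Definition quadrature_integrand (q : R) (u0 : R -> R) (t : R) : R :=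
  1 / (1 - (1 - q) * t * u0 t) * exp (1 / (1 - q) * jackson q (ratio_integrand q u0) t).

Lemma psi_unfold (q : R) (u0 : R -> R) (D F x : R) :
  psi q u0 D F x =
  exp (- (1 / (1 - q)) * jackson q (prefactor_integrand q u0) x) *
  (D + F * jackson q (quadrature_integrand q u0) x).
Proof. reflexivity. Qed.

Lemma Rabs_ln_1_add_le (w : R) : Rabs w <= 1 / 2 -> Rabs (ln (1 + w)) <= 2 * Rabs w.
Proof.
  intros hw. apply Rabs_le_between in hw.
  assert (hz : 0 < 1 + w) by lra.
  assert (hup : ln (1 + w) <= w).
  { pose proof (exp_ineq1_le (ln (1 + w))) as h. rewrite exp_ln in h; lra. }
  assert (hlow : - ln (1 + w) <= / (1 + w) - 1).
  { pose proof (exp_ineq1_le (ln (/ (1 + w)))) as h.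
    rewrite exp_ln, ln_Rinv in h by (try apply Rinv_0_lt_compat; lra). lra. }
  assert (hinv : / (1 + w) - 1 = - w / (1 + w)) by (field; lra).
  assert (- w / (1 + w) <= 2 * Rabs w).
  { apply (Rmult_le_reg_r (1 + w)); [lra|].
    unfold Rdiv. rewrite Rmult_assoc, Rinv_l, Rmult_1_r by lra.
    unfold Rabs; destruct (Rcase_abs w); nra. }
  unfold Rabs at 1; destruct (Rcase_abs (ln (1 + w))); unfold Rabs in *;
    destruct (Rcase_abs w); lra.
Qed.

Lemma exp_le_compat (x y : R) : x <= y -> exp x <= exp y.
Proof. intros [h | <-]; [apply Rlt_le, exp_increasing, h | apply Rle_refl]. Qed.

Section SmallScale.

Variables (q : R) (u0 : R -> R) (K : R).
Hypothesis hq : 0 < q < 1.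

(* The regime near 0 where the logarithms of the coefficients are O(t). *)
Definition controlled (t : R) : Prop :=
  Rabs (u0 t) <= K /\ (1 - q) * Rabs t * K <= 1 / 2.

Lemma Rabs_coef_term_le (t u : R) :
  Rabs u <= K -> Rabs ((1 - q) * t * u) <= (1 - q) * Rabs t * K.
Proof.
  intros hu. rewrite !Rabs_mult, (Rabs_pos_eq (1 - q)) by lra.
  apply Rmult_le_compat_l; [|exact hu].
  apply Rmult_le_pos; [lra | apply Rabs_pos].
Qed.

Lemma Rabs_ln_coef_le (t u : R) : 0 < t -> Rabs u <= K -> (1 - q) * t * K <= 1 / 2 ->
  Rabs (ln (1 + (1 - q) * t * u)) <= 2 * (1 - q) * K * t /\
  Rabs (ln (1 - (1 - q) * t * u)) <= 2 * (1 - q) * K * t.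
Proof.
  intros ht hu hsmall.
  assert (hw := Rabs_coef_term_le t u hu). rewrite (Rabs_pos_eq t) in hw by lra.
  split.
  - eapply Rle_trans; [apply Rabs_ln_1_add_le; lra | lra].
  - replace (1 - (1 - q) * t * u) with (1 + - ((1 - q) * t * u)) by ring.
    eapply Rle_trans; [apply Rabs_ln_1_add_le|]; rewrite Rabs_Ropp; lra.
Qed.

Lemma Rabs_div_pos_le (a t C : R) : 0 < t -> Rabs a <= C * t -> Rabs (a / t) <= C.
Proof.
  intros ht ha. unfold Rdiv. rewrite Rabs_mult, Rabs_inv, (Rabs_pos_eq t) by lra.
  apply (Rmult_le_reg_r t); [exact ht|]. rewrite Rmult_assoc, Rinv_l, Rmult_1_r by lra. exact ha.
Qed.

Lemma Rabs_prefactor_integrand_le (t : R) : 0 < t -> controlled t ->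
  Rabs (prefactor_integrand q u0 t) <= 2 * (1 - q) * K.
Proof.
  intros ht [hu hsmall]. rewrite (Rabs_pos_eq t) in hsmall by lra.
  apply Rabs_div_pos_le; [exact ht|].
  apply (Rabs_ln_coef_le t (u0 t)); assumption.
Qed.

Lemma Rabs_ratio_integrand_le (t : R) : 0 < t -> controlled t -> controlled (q * t) ->
  Rabs (ratio_integrand q u0 t) <= 4 * (1 - q) * K.
Proof.
  intros ht [hu hsmall] [hqu _]. rewrite (Rabs_pos_eq t) in hsmall by lra.
  destruct (Rabs_ln_coef_le t (u0 t) ht hu hsmall) as [_ ha].
  destruct (Rabs_ln_coef_le t (u0 (q * t)) ht hqu hsmall) as [hc _].
  assert (hwa := Rabs_coef_term_le t (u0 t) hu).
  assert (hwc := Rabs_coef_term_le t (u0 (q * t)) hqu).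
  rewrite (Rabs_pos_eq t) in hwa, hwc by lra.
  apply Rabs_le_between in hwa. apply Rabs_le_between in hwc.
  unfold ratio_integrand. rewrite ln_div by lra.
  unfold Rdiv at 1. rewrite Rmult_1_l, Rmult_comm.
  apply Rabs_div_pos_le; [exact ht|].
  eapply Rle_trans; [apply Rabs_triang|]. rewrite Rabs_Ropp. lra.
Qed.

Lemma Rabs_quadrature_integrand_le (t : R) : 0 < t -> (forall k, controlled (q ^ k * t)) ->
  Rabs (quadrature_integrand q u0 t) <= 2 * exp (2 / (1 - q)).
Proof.
  intros ht hctl.
  assert (ht0 := hctl O). simpl in ht0. rewrite Rmult_1_l in ht0.
  destruct ht0 as [hu hsmall]. rewrite (Rabs_pos_eq t) in hsmall by lra.
  assert (hJ : Rabs (jackson q (ratio_integrand q u0) t) <= 4 * (1 - q) * K * Rabs t).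
  { apply Rabs_jackson_le; [exact hq|]. intros k.
    apply Rabs_ratio_integrand_le.
    - apply Rmult_lt_0_compat; [apply pow_lt|]; lra.
    - apply hctl.
    - rewrite <- Rmult_assoc. apply (hctl (S k)). }
  rewrite (Rabs_pos_eq t) in hJ by lra. apply Rabs_le_between in hJ.
  assert (hw := Rabs_coef_term_le t (u0 t) hu).
  rewrite (Rabs_pos_eq t) in hw by lra. apply Rabs_le_between in hw.
  assert (hexp : exp (1 / (1 - q) * jackson q (ratio_integrand q u0) t) <= exp (2 / (1 - q))).
  { apply exp_le_compat.
    assert (hinv : 0 < 1 / (1 - q)) by (apply Rdiv_lt_0_compat; lra).
    replace (2 / (1 - q)) with (1 / (1 - q) * 2) by (field; lra).
    apply Rmult_le_compat_l; lra. }
  unfold quadrature_integrand.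
  rewrite Rabs_mult, (Rabs_pos_eq (exp _)) by apply Rlt_le, exp_pos.
  apply Rmult_le_compat; [apply Rabs_pos | apply Rlt_le, exp_pos | | exact hexp].
  rewrite Rabs_pos_eq by (apply Rlt_le, Rdiv_lt_0_compat; lra).
  apply (Rmult_le_reg_r (1 - (1 - q) * t * u0 t)); [lra|].
  unfold Rdiv. rewrite Rmult_assoc, Rinv_l by lra. lra.
Qed.

End SmallScale.

Section Solution.

Variables (q : R) (b : Rbar) (u0 : R -> R).
Hypothesis hq : 0 < q < 1.
Hypothesis hcont0 : filterlim u0 (within (inI b) (locally 0)) (locally (u0 0)).
Hypothesis hpos1 : forall t, inI b t -> 1 - (1 - q) * t * u0 t > 0.
Hypothesis hpos2 : forall t, inI b t -> 1 + (1 - q) * t * u0 (q * t) > 0.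

Lemma inI_scale (c y : R) : 0 <= c <= 1 -> inI b y -> inI b (c * y).
Proof.
  intros hc [hy0 hyb]. split; [nra|].
  eapply Rbar_le_lt_trans; [|exact hyb]. simpl. nra.
Qed.

Lemma controlled_near_0 : within (inI b) (locally 0) (controlled q u0 (Rabs (u0 0) + 1)).
Proof.
  set (K := Rabs (u0 0) + 1).
  assert (hK : 0 < K) by (pose proof (Rabs_pos (u0 0)); unfold K; lra).
  assert (hu : within (inI b) (locally 0) (fun t => Rabs (u0 t) <= K)).
  { apply (filter_imp (fun t => ball (u0 0) 1 (u0 t))).
    - intros t ht. change (Rabs (u0 t - u0 0) < 1) in ht.
      pose proof (Rabs_triang_inv (u0 t) (u0 0)). unfold K. lra.
    - apply (proj1 (filterlim_locally u0 (u0 0)) hcont0 (mkposreal 1 Rlt_0_1)). }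
  assert (hsmall : locally 0 (fun t => (1 - q) * Rabs t * K <= 1 / 2)).
  { assert (heps : 0 < 1 / (2 * (1 - q) * K)) by (apply Rdiv_lt_0_compat; nra).
    exists (mkposreal _ heps). intros t ht. change (Rabs (t - 0) < 1 / (2 * (1 - q) * K)) in ht.
    rewrite Rminus_0_r in ht.
    apply (Rmult_lt_compat_l (2 * (1 - q) * K)) in ht; [|nra].
    replace (2 * (1 - q) * K * (1 / (2 * (1 - q) * K))) with 1 in ht by (field; nra). nra. }
  apply (filter_and _ _ hu). apply (filter_imp _ _ (fun t h _ => h) hsmall).
Qed.

Lemma eventually_controlled_orbit (y : R) : inI b y ->
  eventually (fun n => forall k, controlled q u0 (Rabs (u0 0) + 1) (q ^ k * (q ^ n * y))).
Proof.
  intros hy. apply eventually_pow_mul_orbit.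
  assert (hlim : is_lim_seq (fun n => q ^ n * y) 0).
  { replace (Finite 0) with (Rbar_mult 0 y) by (simpl; f_equal; ring).
    apply is_lim_seq_scal_r, is_lim_seq_geom. rewrite Rabs_pos_eq; lra. }
  apply (filter_imp (fun n => inI b (q ^ n * y) -> controlled q u0 (Rabs (u0 0) + 1) (q ^ n * y))).
  - intros n h. apply h, inI_scale; [split; [apply pow_le | apply pow_le_1]; lra | exact hy].
  - exact (hlim _ controlled_near_0).
Qed.

Lemma pow_mul_pos (n : nat) (y : R) : 0 < y -> 0 < q ^ n * y.
Proof. intros hy. apply Rmult_lt_0_compat; [apply pow_lt|]; lra. Qed.

Lemma ex_series_prefactor (y : R) : inI b y -> 0 < y ->
  ex_series (fun n => (1 - q) * q ^ n * y * prefactor_integrand q u0 (q ^ n * y)).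
Proof.
  intros hy hy0. apply ex_series_jackson with (M := 2 * (1 - q) * (Rabs (u0 0) + 1)); [exact hq|].
  eapply filter_imp; [|exact (eventually_controlled_orbit y hy)]. intros n hn.
  apply Rabs_prefactor_integrand_le; [lra | apply pow_mul_pos, hy0|].
  specialize (hn O). simpl in hn. rewrite Rmult_1_l in hn. exact hn.
Qed.

Lemma ex_series_ratio (y : R) : inI b y -> 0 < y ->
  ex_series (fun n => (1 - q) * q ^ n * y * ratio_integrand q u0 (q ^ n * y)).
Proof.
  intros hy hy0. apply ex_series_jackson with (M := 4 * (1 - q) * (Rabs (u0 0) + 1)); [exact hq|].
  eapply filter_imp; [|exact (eventually_controlled_orbit y hy)]. intros n hn.
  apply Rabs_ratio_integrand_le; [lra | apply pow_mul_pos, hy0 | |].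
  - specialize (hn O). simpl in hn. rewrite Rmult_1_l in hn. exact hn.
  - specialize (hn 1%nat). simpl in hn. rewrite Rmult_1_r in hn. exact hn.
Qed.

Lemma ex_series_quadrature (y : R) : inI b y -> 0 < y ->
  ex_series (fun n => (1 - q) * q ^ n * y * quadrature_integrand q u0 (q ^ n * y)).
Proof.
  intros hy hy0. apply ex_series_jackson with (M := 2 * exp (2 / (1 - q))); [exact hq|].
  eapply filter_imp; [|exact (eventually_controlled_orbit y hy)]. intros n hn.
  apply (Rabs_quadrature_integrand_le q u0 (Rabs (u0 0) + 1)); [lra | apply pow_mul_pos, hy0 | exact hn].
Qed.

Lemma prefactor_scale (y : R) : inI b y -> 0 < y ->
  exp (- (1 / (1 - q)) * jackson q (prefactor_integrand q u0) (q * y)) =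
  (1 - (1 - q) * y * u0 y) * exp (- (1 / (1 - q)) * jackson q (prefactor_integrand q u0) y).
Proof.
  intros hy hy0. pose proof (hpos1 y hy) as ha.
  assert (hs := jackson_sub_scale q _ y (ex_series_prefactor y hy hy0)).
  unfold prefactor_integrand at 3 in hs.
  replace (- (1 / (1 - q)) * jackson q (prefactor_integrand q u0) (q * y))
    with (ln (1 - (1 - q) * y * u0 y) + - (1 / (1 - q)) * jackson q (prefactor_integrand q u0) y).
  - rewrite exp_plus, exp_ln by lra. reflexivity.
  - replace (jackson q (prefactor_integrand q u0) (q * y))
      with (jackson q (prefactor_integrand q u0) y - (1 - q) * y * (ln (1 - (1 - q) * y * u0 y) / y))
      by lra.
    field. split; lra.
Qed.

Lemma ratio_scale (y : R) : inI b y -> 0 < y ->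
  exp (1 / (1 - q) * jackson q (ratio_integrand q u0) (q * y)) =
  exp (1 / (1 - q) * jackson q (ratio_integrand q u0) y) *
  (1 + (1 - q) * y * u0 (q * y)) / (1 - (1 - q) * y * u0 y).
Proof.
  intros hy hy0. pose proof (hpos1 y hy) as ha. pose proof (hpos2 y hy) as hc.
  assert (hs := jackson_sub_scale q _ y (ex_series_ratio y hy hy0)).
  unfold ratio_integrand at 3 in hs.
  replace (1 / (1 - q) * jackson q (ratio_integrand q u0) y)
    with (1 / (1 - q) * jackson q (ratio_integrand q u0) (q * y) +
          ln ((1 - (1 - q) * y * u0 y) / (1 + (1 - q) * y * u0 (q * y)))).
  - rewrite exp_plus, exp_ln by (apply Rdiv_lt_0_compat; lra). field. split; lra.
  - replace (jackson q (ratio_integrand q u0) y)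
      with (jackson q (ratio_integrand q u0) (q * y) +
            (1 - q) * y * (1 / y * ln ((1 - (1 - q) * y * u0 y) / (1 + (1 - q) * y * u0 (q * y)))))
      by lra.
    field. split; lra.
Qed.

Lemma quadrature_scale (y : R) : inI b y -> 0 < y ->
  jackson q (quadrature_integrand q u0) (q * y) =
  jackson q (quadrature_integrand q u0) y - (1 - q) * y * quadrature_integrand q u0 y.
Proof.
  intros hy hy0. pose proof (jackson_sub_scale q _ y (ex_series_quadrature y hy hy0)). lra.
Qed.

End Solution.

Theorem corollary1 (q : R) (b : Rbar) (u0 : R -> R)
  (hq : 0 < q < 1) (hb : Rbar_lt 0 b)
  (hcont : forall t, inI b t ->
     filterlim u0 (within (inI b) (locally t)) (locally (u0 t)))
  (hpos1 : forall t, inI b t -> 1 - (1 - q) * t * u0 t > 0)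
  (hpos2 : forall t, inI b t -> 1 + (1 - q) * t * u0 (q * t) > 0)
  (D F : R) :
  (forall x, inI b x -> x <> 0 ->
     - dq q (dq q (psi q u0 D F)) x + Vpot q u0 x * psi q u0 D F x = 0)
  /\ psi q u0 D F 0 = D.
Proof.
  assert (hcont0 := hcont 0 (conj (Rle_refl 0) hb)).
  pose proof (prefactor_scale q b u0 hq hcont0 hpos1) as scaleE.
  pose proof (ratio_scale q b u0 hq hcont0 hpos1 hpos2) as scaleW.
  pose proof (quadrature_scale q b u0 hq hcont0) as scaleG.
  split.
  - intros x hx hx0.
    assert (hxp : 0 < x) by (destruct hx; lra).
    assert (hqx : inI b (q * x)) by (apply (inI_scale b q); [lra | exact hx]).
    assert (hqxp : 0 < q * x) by nra.
    pose proof (hpos1 x hx). pose proof (hpos1 (q * x) hqx).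
    unfold Vpot, dq. rewrite !psi_unfold.
    rewrite (scaleE (q * x) hqx hqxp), (scaleE x hx hxp),
      (scaleG (q * x) hqx hqxp), (scaleG x hx hxp).
    unfold quadrature_integrand. rewrite (scaleW x hx hxp).
    field. repeat split; lra.
  - rewrite psi_unfold, !jackson_0, Rmult_0_r, exp_0. ring.
Qed.
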